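(* Let $I$ be a countable set and let $C\subseteq[0,1]^I$ be a connected (in the product topology) chain from $0$ to $1$. Then there are continuous, surjective, nondecreasing functions $f_i:[0,1]\to[0,1]$, $i\in I$, such that $\{(f_i(t))_{i\in I}:t\in[0,1]\}=C$.
   Context: $[0,1]^I$ carries the coordinatewise (product) partial order. A chain from $0$ to $1$ in $[0,1]^I$ is a subset $C$ that is linearly ordered by this order and contains the constant tuples with values $0$ and $1$. *)

From HB Require Import structures.
From mathcomp Require Import all_boot all_order all_algebra.
From mathcomp Require Import all_classical all_reals all_analysis.
Set Implicit Arguments. Unset Strict Implicit. Unset Printing Implicit Defensive.
Import Order.TTheory GRing.Theory Num.Theory.
Local Open Scope classical_set_scope.
Local Open Scope ring_scope.

Definition ple (R : realType) (I : Type) (x y : I -> R) : Prop :=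
  forall i, x i <= y i.

Definition chain01 (R : realType) (I : Type) (C : set (I -> R)) : Prop :=
  [/\ (forall x, C x -> forall i, 0 <= x i <= 1),
      (forall x y, C x -> C y -> ple x y \/ ple y x),
      C (fun _ => 0) & C (fun _ => 1)].

From mathcomp Require Import all_boot all_order all_algebra.
From mathcomp Require Import all_classical all_reals all_analysis.
From mathcomp Require Import ring lra.
Import Order.TTheory GRing.Theory Num.Theory.
Import numFieldTopology.Exports.
Local Open Scope classical_set_scope.
Local Open Scope ring_scope.

(* Enumerating I by [pickle], a point x of [0,1]^I is encoded by the real
   number code x = sum_n 2^-(n+1) x_(i_n).  The code is monotone, strictly
   monotone along a chain (comparable distinct points differ in some
   coordinate), and continuous for the product topology because the series
   converges uniformly.  On the connected chain C it is thus an order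
   isomorphism onto the interval [code 0, code 1]; its inverse, precomposed
   with an affine map from [0,1], is a monotone parametrization of C.  Each
   coordinate of it maps [0,1] onto [0,1], since the projections of the
   connected set C are intervals containing 0 and 1, and a nondecreasing map
   onto an interval has no jumps, hence is continuous. *)

Set Implicit Arguments.
Unset Strict Implicit.

Lemma continuous_series (T : topologicalType) (K : numFieldType)
    (V : normedModType K) (u : T -> V ^nat) N :
  (forall k, continuous (u^~ k)) -> continuous (fun x => series (u x) N).
Proof.
move=> uc; elim: N => [|N IH].
  rewrite (_ : (fun x => _) = cst 0); first exact: cst_continuous.
  by apply: funext => x /=; rewrite /series /= big_geq.
rewrite (_ : (fun x => _) = (fun x => series (u x) N) + u^~ N).
  by move=> x; apply: continuousD; [exact: IH | exact: uc].
by apply: funext => x /=; rewrite seriesSr.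
Qed.

Lemma connected_ivt (T : topologicalType) (R : realType) (A : set T)
    (f : T -> R) x y r :
  connected A -> {within A, continuous f} -> A x -> A y ->
  f x <= r <= f y -> exists2 z, A z & f z = r.
Proof.
move=> Aconn fc Ax Ay; have := connected_continuous_connected Aconn fc.
by move=> /connected_intervalP /(_ (f x) (f y)); apply; [exists x | exists y].
Qed.

Section real_facts.
Variable R : realType.

Lemma series_ge0 (u : R ^nat) n : (forall k, 0 <= u k) -> 0 <= series u n.
Proof. by move=> u0; apply: sumr_ge0 => k _. Qed.

Lemma series_le_lim (u : R ^nat) n :
  (forall k, 0 <= u k) -> cvgn (series u) -> series u n <= limn (series u).
Proof.
move=> u0 cu; apply: nondecreasing_cvgn_le cu _.
by apply/nondecreasing_seqP => k; rewrite seriesSr lerDl.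
Qed.

Lemma sum_half_powers N M : (N <= M)%N ->
  \sum_(N <= k < M) 2^-1 ^+ k.+1 = 2^-1 ^+ N - 2^-1 ^+ M :> R.
Proof.
move=> NM.
rewrite (telescope_sumr_eq (fun k => - 2^-1 ^+ k)) 1?addrC ?opprK //.
by move=> k _; rewrite exprS; field.
Qed.

Lemma near_half_expr_lt (eps : R) :
  0 < eps -> \forall N \near \oo, 2^-1 ^+ N < eps.
Proof.
move=> eps0.
have /cvgr0_norm_lt/(_ _ eps0) : (GRing.exp 2^-1 : R^nat) @ \oo --> 0.
  by apply: cvg_expr; rewrite ger0_norm // invf_lt1 // ltr1n.
by apply: filterS => N; rewrite ger0_norm // exprn_ge0.
Qed.

Lemma affine_itv_param (a b r : R) : a <= r <= b ->
  exists2 t, 0 <= t <= 1 & r = a + t * (b - a).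
Proof.
move=> /andP[ar rb]; have [ab|ab] := eqVneq a b.
  by exists 0; [rewrite lexx ler01 | subst; lra].
have ba : 0 < b - a by rewrite subr_gt0 lt_neqAle ab; lra.
exists ((r - a) / (b - a)); last by rewrite mulfVK ?gt_eqF // addrC subrK.
apply/andP; split; first by apply: divr_ge0; lra.
by rewrite ler_pdivrMr // mul1r lerD2r.
Qed.

End real_facts.

Section nondecreasing_onto_interval.
Variables (R : realType) (a b c d : R) (f : R -> R).
Hypothesis f_nd : {in `[a, b] &, {homo f : s t / s <= t}}.
Hypothesis f_onto : f @` `[a, b]%classic = `[c, d]%classic.

Lemma onto_itv_bounds s : s \in `[a, b] -> c <= f s <= d.
Proof.
by move=> sab; have : `[c, d]%classic (f s) by rewrite -f_onto; exists s.
Qed.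

Lemma nondecreasing_onto_near_lt t eps : t \in `[a, b] -> 0 < eps ->
  \forall s \near t, s \in `[a, b] -> f s < f t + eps.
Proof.
move=> tab eps0; have [ftd|dft] := ltP (f t) d; last first.
  by near=> s => /onto_itv_bounds /andP[_ fsd]; lra.
have /andP[ct _] := onto_itv_bounds tab.
pose u := Num.min (f t + eps / 2) d.
have : `[c, d]%classic u.
  by rewrite /= in_itv /= ge_min lexx orbT andbT le_min; apply/andP; split; lra.
rewrite -f_onto => -[tp tpab ftp].
have ftu : f t < u by rewrite /u lt_min ftd andbT; lra.
have ttp : t < tp by rewrite ltNge; apply/negP => /(f_nd tpab tab); lra.
have uft : u <= f t + eps / 2 by rewrite /u ge_min lexx.
near=> s => sab; have stp : s <= tp by near: s; exact: lt_le_nbhsl.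
by have := f_nd sab tpab stp; lra.
Unshelve. all: by end_near. Qed.

Lemma nondecreasing_onto_near_gt t eps : t \in `[a, b] -> 0 < eps ->
  \forall s \near t, s \in `[a, b] -> f t - eps < f s.
Proof.
move=> tab eps0; have [ct|ftc] := ltP c (f t); last first.
  by near=> s => /onto_itv_bounds /andP[csf _]; lra.
have /andP[_ ftd] := onto_itv_bounds tab.
pose u := Num.max (f t - eps / 2) c.
have : `[c, d]%classic u.
  by rewrite /= in_itv /= le_max lexx orbT /= ge_max; apply/andP; split; lra.
rewrite -f_onto => -[tm tmab ftm].
have uft : u < f t by rewrite /u gt_max ct andbT; lra.
have tmt : tm < t by rewrite ltNge; apply/negP => /(f_nd tab tmab); lra.
have ftu : f t - eps / 2 <= u by rewrite /u le_max lexx.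
near=> s => sab; have tms : tm <= s by near: s; exact: lt_le_nbhsr.
by have := f_nd tmab sab tms; lra.
Unshelve. all: by end_near. Qed.

Lemma nondecreasing_onto_itv_continuous :
  {within `[a, b]%classic, continuous f}.
Proof.
rewrite continuous_subspace_in => t /set_mem tab.
change (f @ nbhs_subspace (t : subspace `[a, b]%classic) --> f t).
rewrite -nbhs_subspace_in //; apply/cvgrPdist_lt => eps eps0.
have lt := nondecreasing_onto_near_lt tab eps0.
have gt := nondecreasing_onto_near_gt tab eps0.
rewrite near_withinE; apply: filterS2 lt gt => s slt sgt sab.
by rewrite ltr_distlC slt ?sgt.
Qed.

End nondecreasing_onto_interval.

Section dyadic_code.
Context {R : realType} {I : countType}.

Definition unit_cube : set (I -> R) := [set x | forall i, 0 <= x i <= 1].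
(* Indices [n] outside the range of [pickle] read as [0]. *)
Definition coord (x : I -> R) (n : nat) : R := oapp x 0 (unpickle n).
Definition code_seq (x : I -> R) : R ^nat := fun n => 2^-1 ^+ n.+1 * coord x n.
Definition code (x : I -> R) : R := limn (series (code_seq x)).

Lemma ple_anti (x y : I -> R) : ple x y -> ple y x -> x = y.
Proof. by move=> xy yx; apply: funext => i; apply/eqP; rewrite eq_le xy yx. Qed.

Lemma coord_pickle x i : coord x (pickle i) = x i.
Proof. by rewrite /coord pickleK. Qed.

Lemma coord_le x y n : ple x y -> coord x n <= coord y n.
Proof. by move=> xy; rewrite /coord; case: unpickle. Qed.

Lemma coord01 x : unit_cube x -> forall n, 0 <= coord x n <= 1.
Proof.
by move=> x01 n; rewrite /coord; case: unpickle => //=; rewrite lexx ler01.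
Qed.

Lemma coord_continuous n : continuous (fun x : {ptws I -> R} => coord x n).
Proof.
rewrite /coord; case: unpickle => [i|] /=; last exact: cst_continuous.
exact: (@proj_continuous I (fun _ => R) i).
Qed.

Lemma code_seq_ge0 x : unit_cube x -> forall n, 0 <= code_seq x n.
Proof.
by move=> /coord01 x01 n; have /andP[? _] := x01 n; rewrite mulr_ge0 ?exprn_ge0.
Qed.

Lemma code_seq_le x : unit_cube x -> forall n, code_seq x n <= 2^-1 ^+ n.+1.
Proof.
by move=> /coord01 x01 n; have /andP[_ ?] := x01 n; rewrite ler_piMr ?exprn_ge0.
Qed.

Lemma code_cvg x : unit_cube x -> cvgn (series (code_seq x)).
Proof.
move=> x01; apply: (@series_le_cvg _ _ (geometric 2^-1 2^-1)).
- exact: code_seq_ge0.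
- by move=> n; rewrite geometric_ge0.
- by move=> n; rewrite /= -exprS code_seq_le.
- by apply: is_cvg_geometric_series; rewrite ger0_norm // invf_lt1 // ltr1n.
Qed.

Lemma code_tail x : unit_cube x -> forall N,
  series (code_seq x) N <= code x <= series (code_seq x) N + 2^-1 ^+ N.
Proof.
move=> x01 N; apply/andP; split.
  exact: series_le_lim (code_seq_ge0 x01) (code_cvg x01).
apply: limr_le; first exact: code_cvg.
near=> M; have NM : (N <= M)%N by near: M; exact: nbhs_infty_ge.
rewrite -lerBlDl sub_series_geq //.
apply: le_trans (_ : \sum_(N <= k < M) 2^-1 ^+ k.+1 <= _).
  by apply: ler_sum => k _; exact: code_seq_le.
by rewrite sum_half_powers // lerBlDr lerDl exprn_ge0.
Unshelve. all: by end_near. Qed.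

Lemma code_le x y : unit_cube x -> unit_cube y -> ple x y -> code x <= code y.
Proof.
move=> x01 y01 xy; apply: lim_series_le; [exact: code_cvg.. |].
by move=> n; rewrite ler_wpM2l ?exprn_ge0 ?coord_le.
Qed.

Lemma code_lt x y i : unit_cube x -> unit_cube y -> ple x y -> x i < y i ->
  code x < code y.
Proof.
move=> x01 y01 xy xyi; pose u := code_seq y - code_seq x.
have u_ge0 k : 0 <= u k.
  by rewrite /u /= -mulrBr mulr_ge0 ?exprn_ge0 ?subr_ge0 ?coord_le.
have u_gt0 : 0 < u (pickle i).
  by rewrite /u /= -mulrBr mulr_gt0 ?exprn_gt0 ?subr_gt0 ?coord_pickle.
have [cx cy] := (code_cvg x01, code_cvg y01).
rewrite -subr_gt0 /code -lim_seriesB //.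
apply: lt_le_trans (series_le_lim (pickle i).+1 u_ge0 (is_cvg_seriesB cy cx)).
by rewrite seriesSr ltr_wpDl ?series_ge0.
Qed.

Lemma code_continuous :
  {within (unit_cube : set {ptws I -> R}), continuous (code : {ptws I -> R} -> R)}.
Proof.
apply: (@uniform_limit_continuous_subspace {ptws I -> R} R unit_cube
  ((fun N (x : {ptws I -> R}) => series (code_seq x) N) @ \oo) code).
- rewrite near_map; apply: nearW => N; apply: continuous_subspaceT.
  apply: continuous_series => k x.
  apply: (@continuousM _ _ (cst _) (fun y : {ptws I -> R} => coord y k)).
    exact: cst_continuous.
  exact: coord_continuous.
- move=> P /uniform_nbhs[E [+ EP]].
  rewrite -entourage_ballE => -[eps /= eps0 epsE].
  near=> N; apply: EP => x /= x01; apply: epsE => /=.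
  have /andP[lo hi] := code_tail x01 N; rewrite /ball /= ger0_norm ?subr_ge0 //.
  apply: le_lt_trans (_ : 2^-1 ^+ N < eps); first by rewrite lerBlDl.
  by near: N; exact: near_half_expr_lt.
Unshelve. all: by end_near. Qed.

End dyadic_code.

Section connected_chain.
Variables (R : realType) (I : countType) (C : set (I -> R)).
Hypothesis C01 : chain01 C.
Hypothesis Cconn : connected (C : set {ptws I -> R}).

Local Notation code0 := (code (fun _ : I => 0 : R)).
Local Notation code1 := (code (fun _ : I => 1 : R)).

Lemma chain_unit_cube : C `<=` unit_cube.
Proof. by case: C01. Qed.

Lemma chain_code_lt x y : C x -> C y -> ple x y -> x <> y -> code x < code y.
Proof.
move=> Cx Cy xy xny; have [[i xyi] | nlt] := pselect (exists i, x i < y i).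
  exact: code_lt (chain_unit_cube Cx) (chain_unit_cube Cy) xy xyi.
case: xny; apply: ple_anti => // i; rewrite leNgt; apply/negP => yxi.
by apply: nlt; exists i.
Qed.

Lemma chain_code_le_ple x y : C x -> C y -> code x <= code y -> ple x y.
Proof.
case: C01 => _ chain _ _ Cx Cy; have [//|yx] := chain _ _ Cx Cy.
have [->|yNx] := pselect (y = x); first by move=> _ i.
by have := chain_code_lt Cy Cx yx yNx; rewrite ltNge => /negP.
Qed.

Lemma chain_code_inj x y : C x -> C y -> code x = code y -> x = y.
Proof.
by move=> Cx Cy xy; apply: ple_anti; apply: chain_code_le_ple; rewrite ?xy.
Qed.

Lemma chain_code_bounds x : C x -> code0 <= code x <= code1.
Proof.
case: C01 => _ _ C0 C1 Cx; have x01 := chain_unit_cube Cx.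
have [lo hi] : ple (fun _ => 0) x /\ ple x (fun _ => 1).
  by split=> i; have /andP[] := x01 i.
by rewrite (code_le (chain_unit_cube C0) x01 lo)
  (code_le x01 (chain_unit_cube C1) hi).
Qed.

Lemma chain_code01 : code0 <= code1.
Proof. by case: C01 => _ _ _ C1; have /andP[] := chain_code_bounds C1. Qed.

Lemma chain_code_continuous :
  {within (C : set {ptws I -> R}), continuous (code : {ptws I -> R} -> R)}.
Proof.
exact: (@continuous_subspaceW {ptws I -> R} R C unit_cube _ chain_unit_cube
  code_continuous).
Qed.

Definition chain_level (t : R) : set (I -> R) :=
  [set x | C x /\ code x = code0 + t * (code1 - code0)].

Definition chain_point (t : R) : I -> R := xget (fun _ => 0) (chain_level t).

Lemma chain_pointP t : 0 <= t <= 1 -> chain_level t (chain_point t).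
Proof.
case: C01 => _ _ C0 C1 /andP[t0 t1]; apply: xgetPex.
have ab := chain_code01.
have [|x Cx cx] := connected_ivt Cconn chain_code_continuous C0 C1
  (r := code0 + t * (code1 - code0)); first by apply/andP; split; nra.
by exists x.
Qed.

Lemma chain_point_surj x : C x -> exists2 t, 0 <= t <= 1 & chain_point t = x.
Proof.
move=> Cx; have [t t01 cx] := affine_itv_param (chain_code_bounds Cx).
exists t => //; have [Ct ct] := chain_pointP t01.
by apply: chain_code_inj => //; rewrite ct.
Qed.

Lemma chain_point_homo s t : 0 <= s <= 1 -> 0 <= t <= 1 -> s <= t ->
  ple (chain_point s) (chain_point t).
Proof.
move=> s01 t01 st; have [Cs cs] := chain_pointP s01.
have [Ct ct] := chain_pointP t01; apply: chain_code_le_ple => //.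
by rewrite cs ct lerD2l ler_wpM2r // subr_ge0 chain_code01.
Qed.

Lemma chain_coord_onto i v : 0 <= v <= 1 -> exists2 x, C x & x i = v.
Proof.
case: C01 => _ _ C0 C1.
apply: (connected_ivt (f := fun x : {ptws I -> R} => x i) Cconn _ C0 C1).
by apply: continuous_subspaceT => x; exact: (@proj_continuous I (fun _ => R) i).
Qed.

Lemma chain_point_coord_onto i :
  (fun t => chain_point t i) @` `[0, 1]%classic = `[0, 1]%classic.
Proof.
apply/seteqP; split => [_ [t /= t01 <-] | v /= v01].
  rewrite in_itv /= in t01 *; have [Ct _] := chain_pointP t01.
  exact: chain_unit_cube Ct i.
rewrite in_itv /= in v01; have [x Cx <-] := chain_coord_onto i v01.
by have [t t01 <-] := chain_point_surj Cx; exists t => //=; rewrite in_itv.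
Qed.

Lemma chain_point_image : [set chain_point t | t in `[0, 1]%classic] = C.
Proof.
apply/seteqP; split => [_ [t /= t01 <-] | x Cx].
  by rewrite in_itv /= in t01; have [] := chain_pointP t01.
by have [t t01 <-] := chain_point_surj Cx; exists t => //=; rewrite in_itv.
Qed.

End connected_chain.

Unset Implicit Arguments.
Set Strict Implicit.

Theorem mainTheorem16 (R : realType) (I : countType) (C : set (I -> R)) :
  chain01 C ->
  @connected {ptws I -> R} C ->
  exists f : I -> R -> R,
    (forall i, {within `[0, 1]%classic, continuous (f i)}) /\
    (forall i, f i @` `[0, 1]%classic = `[0, 1]%classic) /\
    (forall i, {in `[0, 1] &, {homo f i : s t / s <= t}}) /\
    [set (fun i => f i t) | t in `[0, 1]%classic] = C.
Proof.
move=> C01 Cconn; exists (fun i t => chain_point C t i).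
have homo i : {in `[0, 1] &, {homo (fun t => chain_point C t i) : s t / s <= t}}.
  by move=> s t; rewrite !in_itv /= => s01 t01 st; exact: chain_point_homo.
have onto := chain_point_coord_onto C01 Cconn.
split=> [i|]; first exact: nondecreasing_onto_itv_continuous (homo i) (onto i).
split; first exact: onto.
split; first exact: homo.
exact: chain_point_image.
Qed.
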